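(* Let $k$ be a commutative ring, $H$ a cocommutative Hopf algebra over $k$ with antipode $S$, $A$ a cleft right $H$-comodule algebra with commutative $B=A^{\mathrm{co}H}$, regarded as a left $H$-module algebra via $h\cdot b=t(h_{(1)})bu(h_{(2)})$. Assume $\Omega_A\neq\emptyset$ and fix $t_0\in\Omega_A$; let $u_0=t_0\circ S$. Then $F:Z^1(H,B)\to\Omega_A$, $F(v)=v*t_0$, is a bijection with inverse $t\mapsto t*u_0$; $F$ maps cohomologous cocycles to equivalent elements of $\Omega_A$ and $F^{-1}$ maps equivalent elements to cohomologous cocycles. Hence $F$ induces a bijection $H^1(H,B)\to\overline{\Omega}_A$.
   Context: $\Delta(h)=h_{(1)}\otimes h_{(2)}$, $\rho(a)=a_{[0]}\otimes a_{[1]}$, $B=\{a:\rho(a)=a\otimes1\}$; convolution $(f*g)(h)=f(h_{(1)})g(h_{(2)})$. $A$ cleft: there is a convolution invertible $H$-colinear $t:H\to A$ ($\rho(t(h))=t(h_{(1)})\otimes h_{(2)}$) with inverse $u$; the module algebra structure on $B$ is independent of $t$. $\Omega_A$ is the set of $H$-colinear algebra maps $H\to A$; $t_1\sim t_2$ in $\Omega_A$ iff there is a unit $b\in U(B)$ with $bt_1(h)=t_2(h)b$ for all $h$; $\overline{\Omega}_A=\Omega_A/\sim$. $Z^1(H,B)$ is the group (under convolution) of convolution invertible $v:H\to B$ with $v(hk)=(h_{(1)}\cdot v(k))v(h_{(2)})$; $B^1(H,B)=\{f_b:b\in U(B)\}$ with $f_b(h)=(h\cdot b)b^{-1}$; $v\sim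 v_1$ (cohomologous) iff $v=f_b*v_1$ for some $b\in U(B)$; $H^1(H,B)=Z^1(H,B)/B^1(H,B)$. *)

(* Hopf algebras over a commutative ring k, encoded without
   a tensor-product library: an element of U (x) V is represented by a finite
   list of pairs (a formal sum of pure tensors), and two such lists are equal
   in U (x) V iff they agree on every k-bilinear map into every k-module
   (the universal property of the tensor product). *)
From HB Require Import structures.
From mathcomp Require Import all_boot all_order all_algebra.
Set Implicit Arguments. Unset Strict Implicit. Unset Printing Implicit Defensive.
Import Order.TTheory GRing.Theory.
Local Open Scope ring_scope.

Section Hopf.
Variable k : comPzRingType.

Definition klin (U M : lmodType k) (f : U -> M) :=
  forall (a : k) (x y : U), f (a *: x + y) = a *: f x + f y.

Definition kbilin (U V M : lmodType k) (f : U -> V -> M) :=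
  (forall v a x y, f (a *: x + y) v = a *: f x v + f y v) /\
  (forall u a x y, f u (a *: x + y) = a *: f u x + f u y).

Definition ktrilin (U V W M : lmodType k) (f : U -> V -> W -> M) :=
  (forall v w a x y, f (a *: x + y) v w = a *: f x v w + f y v w) /\
  (forall u w a x y, f u (a *: x + y) w = a *: f u x w + f u y w) /\
  (forall u v a x y, f u v (a *: x + y) = a *: f u v x + f u v y).

Definition tev (U V M : lmodType k) (x : seq (U * V)) (f : U -> V -> M) : M :=
  \sum_(p <- x) f p.1 p.2.

Variables (H A : algType k).

Definition is_hopf (delta : H -> seq (H * H)) (eps : H -> k) (S : H -> H) :=
  [/\
      (forall (M : lmodType k) (f : H -> H -> M), kbilin f ->
         klin (fun h => tev (delta h) f)),
      (forall a x y, eps (a *: x + y) = a * eps x + eps y),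
      (forall (M : lmodType k) (f : H -> H -> H -> M), ktrilin f -> forall h,
         \sum_(p <- delta h) \sum_(q <- delta p.1) f q.1 q.2 p.2 =
         \sum_(p <- delta h) \sum_(q <- delta p.2) f p.1 q.1 q.2),
      (forall h, (\sum_(p <- delta h) eps p.1 *: p.2 = h) /\
                 (\sum_(p <- delta h) eps p.2 *: p.1 = h)) &
      [/\
      (forall (M : lmodType k) (f : H -> H -> M), kbilin f ->
         (tev (delta 1) f = f 1 1) /\
         forall x y, tev (delta (x * y)) f =
           \sum_(p <- delta x) \sum_(q <- delta y) f (p.1 * q.1) (p.2 * q.2)),
      ((eps 1 = 1) /\ forall x y, eps (x * y) = eps x * eps y) &
      [/\ klin S,
          (forall h, \sum_(p <- delta h) S p.1 * p.2 = eps h *: 1) &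
          (forall h, \sum_(p <- delta h) p.1 * S p.2 = eps h *: 1)]]].

Definition cocommutative (delta : H -> seq (H * H)) :=
  forall (M : lmodType k) (f : H -> H -> M), kbilin f ->
    forall h, tev (delta h) f = tev (delta h) (fun x y => f y x).

Definition is_comod_alg (delta : H -> seq (H * H)) (eps : H -> k)
    (rho : A -> seq (A * H)) :=
  [/\ (forall (M : lmodType k) (f : A -> H -> M), kbilin f ->
         klin (fun a => tev (rho a) f)),
      (forall (M : lmodType k) (f : A -> H -> H -> M), ktrilin f -> forall a,
         \sum_(p <- rho a) \sum_(q <- rho p.1) f q.1 q.2 p.2 =
         \sum_(p <- rho a) \sum_(q <- delta p.2) f p.1 q.1 q.2),
      (forall a, \sum_(p <- rho a) eps p.2 *: p.1 = a) &
      (forall (M : lmodType k) (f : A -> H -> M), kbilin f ->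
         (tev (rho 1) f = f 1 1) /\
         forall x y, tev (rho (x * y)) f =
           \sum_(p <- rho x) \sum_(q <- rho y) f (p.1 * q.1) (p.2 * q.2))].

Definition coinv (rho : A -> seq (A * H)) (a : A) :=
  forall (M : lmodType k) (f : A -> H -> M), kbilin f -> tev (rho a) f = f a 1.

Definition unitB rho (b : A) :=
  coinv rho b /\ exists c, [/\ coinv rho c, b * c = 1 & c * b = 1].

Definition conv (delta : H -> seq (H * H)) (f g : H -> A) : H -> A :=
  fun h => \sum_(p <- delta h) f p.1 * g p.2.

Definition conv1 (eps : H -> k) : H -> A := fun h => eps h *: 1.

Definition colinear delta (rho : A -> seq (A * H)) (t : H -> A) :=
  klin t /\ forall h (M : lmodType k) (f : A -> H -> M), kbilin f ->
    tev (rho (t h)) f = \sum_(p <- delta h) f (t p.1) p.2.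

Definition cleaving delta eps rho (t u : H -> A) :=
  [/\ colinear delta rho t, klin u,
      conv delta t u =1 conv1 eps & conv delta u t =1 conv1 eps].

Definition act delta (t u : H -> A) (h : H) (b : A) : A :=
  \sum_(p <- delta h) t p.1 * b * u p.2.

Definition Omega delta rho (t : H -> A) :=
  [/\ colinear delta rho t, t 1 = 1 & forall x y, t (x * y) = t x * t y].

Definition equivOmega rho (t1 t2 : H -> A) :=
  exists b, unitB rho b /\ forall h, b * t1 h = t2 h * b.

Definition Z1 delta eps rho (t u : H -> A) (v : H -> A) :=
  [/\ klin v, (forall h, coinv rho (v h)),
      (exists w, [/\ klin w, (forall h, coinv rho (w h)),
                     conv delta v w =1 conv1 eps & conv delta w v =1 conv1 eps]) &
      forall h l, v (h * l) = \sum_(p <- delta h) act delta t u p.1 (v l) * v p.2].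

Definition cohomologous delta rho (t u : H -> A) (v v1 : H -> A) :=
  exists b c, [/\ coinv rho b, coinv rho c, b * c = 1, c * b = 1 &
    v =1 conv delta (fun h => act delta t u h b * c) v1].

End Hopf.

From mathcomp Require Import all_boot all_order all_algebra.
Set Implicit Arguments. Unset Strict Implicit. Unset Printing Implicit Defensive.
Import GRing.Theory.
Local Open Scope ring_scope.

(* Since H is cocommutative and B is commutative, the action h.b = t(h1) b u(h2)
   does not depend on the cleaving map: h.b = s(h1) b s(S h2) for every s in
   Omega_A.  Taking s = t0, the multiplicativity of v * t0 unfolds to the cocycle
   identity for v, and t0 o S is the convolution inverse of t0, so v |-> v * t0
   and s |-> s * (t0 o S) are mutually inverse.  Finally, for s in Omega_A and a
   unit b of B the coboundary f_b satisfies (f_b * s)(h) = b^-1 s(h) b, so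
   cohomologous cocycles correspond to conjugate elements of Omega_A. *)

Section Linearity.
Variable k : comPzRingType.

Lemma klin0 (U M : lmodType k) (f : U -> M) : klin f -> f 0 = 0.
Proof.
move=> hf; have := hf 1 0 0; rewrite !scale1r addr0 => e.
by apply: (@addrI _ (f 0)); rewrite addr0 -e.
Qed.

Lemma klinD (U M : lmodType k) (f : U -> M) (hf : klin f) x y : f (x + y) = f x + f y.
Proof. by have := hf 1 x y; rewrite !scale1r. Qed.

Lemma klinZ (U M : lmodType k) (f : U -> M) (hf : klin f) a x : f (a *: x) = a *: f x.
Proof. by rewrite -[a *: x]addr0 hf klin0 // addr0. Qed.

Lemma klin_sum (U M : lmodType k) (f : U -> M) I (r : seq I) (F : I -> U) :
  klin f -> f (\sum_(i <- r) F i) = \sum_(i <- r) f (F i).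
Proof.
move=> hf; elim: r => [|i r IH]; first by rewrite !big_nil klin0.
by rewrite !big_cons klinD // IH.
Qed.

Lemma klin_id (U : lmodType k) : klin (fun x : U => x).
Proof. by []. Qed.

Lemma klin_comp (U V M : lmodType k) (f : U -> V) (g : V -> M) :
  klin f -> klin g -> klin (fun x => g (f x)).
Proof. by move=> hf hg a x y; rewrite hf hg. Qed.

Lemma klin_big (U M : lmodType k) I (r : seq I) (F : I -> U -> M) :
  (forall i, klin (F i)) -> klin (fun x => \sum_(i <- r) F i x).
Proof.
move=> hF a x y; rewrite scaler_sumr -big_split /=.
by apply: eq_bigr => i _; rewrite hF.
Qed.

Lemma klin_mull (U : lmodType k) (B : algType k) (f : U -> B) (c : B) :
  klin f -> klin (fun x => c * f x).
Proof. by move=> hf a x y; rewrite hf mulrDr scalerAr. Qed.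

Lemma klin_mulr (U : lmodType k) (B : algType k) (f : U -> B) (c : B) :
  klin f -> klin (fun x => f x * c).
Proof. by move=> hf a x y; rewrite hf mulrDl scalerAl. Qed.

Lemma kbilinP (U V M : lmodType k) (f : U -> V -> M) :
  (forall v, klin (f^~ v)) -> (forall u, klin (f u)) -> kbilin f.
Proof. by move=> h1 h2; split=> [v|u]; [apply: h1|apply: h2]. Qed.

Lemma kbilin_linl (U V M : lmodType k) (f : U -> V -> M) v : kbilin f -> klin (f^~ v).
Proof. by case=> h1 _ a x y; apply: h1. Qed.

Lemma kbilin_linr (U V M : lmodType k) (f : U -> V -> M) u : kbilin f -> klin (f u).
Proof. by case=> _ h2 a x y; apply: h2. Qed.

Lemma ktrilinP (U V W M : lmodType k) (f : U -> V -> W -> M) :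
  (forall v w, klin (fun x => f x v w)) -> (forall u w, klin (fun x => f u x w)) ->
  (forall u v, klin (f u v)) -> ktrilin f.
Proof. by move=> h1 h2 h3; split=> [v w|]; [|split=> [u w|u v]]; [apply: h1|apply: h2|apply: h3]. Qed.

Lemma klin_kbilinl (U V W M : lmodType k) (g : V -> W -> M) (f : U -> V) w :
  kbilin g -> klin f -> klin (fun x => g (f x) w).
Proof. by move=> hg hf; apply: klin_comp hf (kbilin_linl _ hg). Qed.

Lemma klin_kbilinr (U V W M : lmodType k) (g : V -> W -> M) (f : U -> W) v :
  kbilin g -> klin f -> klin (fun x => g v (f x)).
Proof. by move=> hg hf; apply: klin_comp hf (kbilin_linr _ hg). Qed.

End Linearity.

Section CleftHopfGalois.
Variable k : comPzRingType.
Variables (H A : algType k).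
Variables (delta : H -> seq (H * H)) (eps : H -> k) (S : H -> H)
  (rho : A -> seq (A * H)).
Hypothesis hH : is_hopf delta eps S.
Hypothesis hcc : cocommutative delta.
Hypothesis hA : is_comod_alg delta eps rho.

Definition dsum (M : lmodType k) (h : H) (g : H -> H -> M) : M :=
  \sum_(p <- delta h) g p.1 p.2.

Definition rsum (M : lmodType k) (a : A) (f : A -> H -> M) : M :=
  \sum_(p <- rho a) f p.1 p.2.

Lemma klin_dsum (M : lmodType k) (g : H -> H -> M) : kbilin g -> klin (fun h => dsum h g).
Proof. by case: hH => hD _ _ _ _ hg; apply: hD. Qed.

Lemma klin_dsum_comp (U M : lmodType k) (phi : U -> H) (g : H -> H -> M) :
  klin phi -> kbilin g -> klin (fun x => dsum (phi x) g).
Proof. by move=> hphi hg; apply: klin_comp hphi (klin_dsum hg). Qed.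

Lemma klin_dsum_fun (U M : lmodType k) (c : H) (G : U -> H -> H -> M) :
  (forall a b, klin (fun x => G x a b)) -> klin (fun x => dsum c (G x)).
Proof. by move=> hG; apply: (@klin_big _ _ _ _ _ (fun p x => G x p.1 p.2)) => p. Qed.

Lemma klin_rsum (M : lmodType k) (f : A -> H -> M) : kbilin f -> klin (fun a => rsum a f).
Proof. by case: hA => hrho _ _ _ hf; apply: hrho. Qed.

Lemma klin_rsum_comp (U M : lmodType k) (phi : U -> A) (g : A -> H -> M) :
  klin phi -> kbilin g -> klin (fun x => rsum (phi x) g).
Proof. by move=> hphi hg; apply: klin_comp hphi (klin_rsum hg). Qed.

Lemma klin_rsum_fun (U M : lmodType k) (c : A) (G : U -> A -> H -> M) :
  (forall a b, klin (fun x => G x a b)) -> klin (fun x => rsum c (G x)).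
Proof. by move=> hG; apply: (@klin_big _ _ _ _ _ (fun p x => G x p.1 p.2)) => p. Qed.

Lemma klinS : klin S.
Proof. by case: hH => _ _ _ _ [_ _ []]. Qed.

Ltac solve_klin :=
  cbv beta;
  first
  [ exact: klin_id
  | assumption
  | match goal with hf : forall _, klin _ |- _ => exact: hf end
  | match goal with hf : forall _ _, klin _ |- _ => exact: hf end
  | match goal with hf : forall _ _ _, klin _ |- _ => exact: hf end
  | apply: kbilinP => ?; solve_klin
  | apply: ktrilinP => ? ?; solve_klin
  | apply: klin_dsum_fun => ? ?; solve_klin
  | apply: klin_dsum_comp; solve_klin
  | apply: klin_rsum_fun => ? ?; solve_klin
  | apply: klin_rsum_comp; solve_klin
  | apply: klin_mulr; solve_klin
  | apply: klin_mull; solve_klin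
  | apply: (klin_comp (g := S)); [solve_klin | exact: klinS]
  | apply: klin_kbilinl; solve_klin
  | apply: klin_kbilinr; solve_klin ].

Lemma eq_dsum (M : lmodType k) h (g g' : H -> H -> M) :
  (forall x y, g x y = g' x y) -> dsum h g = dsum h g'.
Proof. by move=> e; apply: eq_bigr => p _; apply: e. Qed.

Lemma scaler_dsum (M : lmodType k) h (g : H -> H -> M) c :
  c *: dsum h g = dsum h (fun x y => c *: g x y).
Proof. exact: scaler_sumr. Qed.

Lemma mulr_dsumr (B : algType k) h (g : H -> H -> B) c :
  c * dsum h g = dsum h (fun x y => c * g x y).
Proof. exact: mulr_sumr. Qed.

Lemma mulr_dsuml (B : algType k) h (g : H -> H -> B) c :
  dsum h g * c = dsum h (fun x y => g x y * c).
Proof. exact: mulr_suml. Qed.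

Lemma klin_dsumE (M N : lmodType k) h (g : H -> H -> M) (phi : M -> N) :
  klin phi -> phi (dsum h g) = dsum h (fun x y => phi (g x y)).
Proof. exact: klin_sum. Qed.

Lemma exchange_dsum (M : lmodType k) h l (G : H -> H -> H -> H -> M) :
  dsum h (fun x y => dsum l (fun a b => G x y a b)) =
  dsum l (fun a b => dsum h (fun x y => G x y a b)).
Proof. exact: exchange_big. Qed.

Lemma dsum_dsum (M : lmodType k) h (G : H -> H -> H) (g : H -> H -> M) :
  kbilin g -> dsum (dsum h G) g = dsum h (fun x y => dsum (G x y) g).
Proof. by move=> hg; apply: (klin_dsumE _ _ (klin_dsum hg)). Qed.

Lemma dsum_coassoc (M : lmodType k) (F : H -> H -> H -> M) h : ktrilin F ->
  dsum h (fun x z => dsum x (fun a b => F a b z)) =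
  dsum h (fun x y => dsum y (fun a b => F x a b)).
Proof. by case: hH => _ _ hco _ _ hF; apply: hco. Qed.

Lemma dsum_epsr (M : lmodType k) (phi : H -> M) h : klin phi ->
  dsum h (fun x y => eps y *: phi x) = phi h.
Proof.
case: hH => _ _ _ hcounit _ hphi; rewrite -{2}(proj2 (hcounit h)) klin_sum //.
by apply: eq_bigr => p _; rewrite klinZ.
Qed.

Lemma dsum_epsl (M : lmodType k) (phi : H -> M) h : klin phi ->
  dsum h (fun x y => eps x *: phi y) = phi h.
Proof.
case: hH => _ _ _ hcounit _ hphi; rewrite -{2}(proj1 (hcounit h)) klin_sum //.
by apply: eq_bigr => p _; rewrite klinZ.
Qed.

Lemma dsum1 (M : lmodType k) (g : H -> H -> M) : kbilin g -> dsum 1 g = g 1 1.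
Proof. by case: hH => _ _ _ _ [hD _ _] hg; case: (hD _ _ hg). Qed.

Lemma dsumM (M : lmodType k) (g : H -> H -> M) x y : kbilin g ->
  dsum (x * y) g = dsum x (fun a b => dsum y (fun c d => g (a * c) (b * d))).
Proof. by case: hH => _ _ _ _ [hD _ _] hg; case: (hD _ _ hg) => _; apply. Qed.

Lemma eps1 : eps 1 = 1.
Proof. by case: hH => _ _ _ _ [_ [] ]. Qed.

Lemma epsM x y : eps (x * y) = eps x * eps y.
Proof. by case: hH => _ _ _ _ [_ [_ ->]]. Qed.

Lemma dsum_antipodel h : dsum h (fun x y => S x * y) = eps h *: 1.
Proof. by case: hH => _ _ _ _ [_ _ [_ hS _]]; apply: hS. Qed.

Lemma dsum_antipoder h : dsum h (fun x y => x * S y) = eps h *: 1.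
Proof. by case: hH => _ _ _ _ [_ _ [_ _ hS]]; apply: hS. Qed.

Lemma dsumC (M : lmodType k) (g : H -> H -> M) h : kbilin g ->
  dsum h g = dsum h (fun x y => g y x).
Proof. by move=> hg; apply: hcc. Qed.

Lemma antipode1 : S 1 = 1.
Proof.
have := dsum_antipodel 1; rewrite dsum1; last by solve_klin.
by rewrite mulr1 eps1 scale1r.
Qed.

(* S y S x = S(x1 y1) (x2 y2) S y3 S x3 = S (x y). *)
Lemma antipodeM x y : S (x * y) = S y * S x.
Proof.
symmetry.
transitivity (dsum x (fun X x3 => dsum y (fun Y y3 => eps X *: (eps Y *: (S y3 * S x3))))).
  rewrite -[in LHS](dsum_epsl (phi := fun x3 => S y * S x3) x); last by solve_klin.
  apply: eq_dsum => X x3.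
  rewrite -(dsum_epsl (phi := fun y3 => S y3 * S x3) y); last by solve_klin.
  by rewrite scaler_dsum.
transitivity (dsum x (fun X x3 => dsum y (fun Y y3 => dsum X (fun x1 x2 => dsum Y (fun y1 y2 =>
                S (x1 * y1) * (x2 * y2) * (S y3 * S x3)))))).
  apply: eq_dsum => X x3; apply: eq_dsum => Y y3.
  rewrite scalerA -epsM -[in LHS](mul1r (S y3 * S x3)) scalerAl -dsum_antipodel.
  rewrite dsumM; last by solve_klin.
  by rewrite mulr_dsuml; apply: eq_dsum => x1 x2; rewrite mulr_dsuml.
transitivity (dsum x (fun X x3 => dsum X (fun x1 x2 => dsum y (fun Y y3 => dsum Y (fun y1 y2 =>
                S (x1 * y1) * (x2 * y2) * (S y3 * S x3)))))).
  by apply: eq_dsum => X x3; rewrite exchange_dsum.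
rewrite dsum_coassoc; last by solve_klin.
transitivity (dsum x (fun x1 Z => dsum Z (fun x2 x3 => dsum y (fun y1 W => dsum W (fun y2 y3 =>
                S (x1 * y1) * (x2 * y2) * (S y3 * S x3)))))).
  apply: eq_dsum => x1 Z; apply: eq_dsum => x2 x3.
  by rewrite dsum_coassoc; last by solve_klin.
transitivity (dsum x (fun x1 Z => dsum y (fun y1 W => eps Z *: (eps W *: S (x1 * y1))))).
  apply: eq_dsum => x1 Z.
  transitivity (dsum Z (fun x2 x3 => dsum y (fun y1 W => eps W *: (S (x1 * y1) * (x2 * S x3))))).
    apply: eq_dsum => x2 x3; apply: eq_dsum => y1 W.
    transitivity (S (x1 * y1) * (x2 * dsum W (fun y2 y3 => y2 * S y3)) * S x3).
      rewrite mulr_dsumr mulr_dsumr mulr_dsuml; apply: eq_dsum => y2 y3.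
      by rewrite !mulrA.
    by rewrite dsum_antipoder -scalerAr mulr1 -scalerAr -scalerAl !mulrA.
  rewrite exchange_dsum; apply: eq_dsum => y1 W.
  rewrite -scaler_dsum -mulr_dsumr dsum_antipoder.
  by rewrite -scalerAr mulr1 scalerA mulrC -scalerA.
rewrite -[RHS](dsum_epsr (phi := fun x1 => S (x1 * y)) x); last by solve_klin.
apply: eq_dsum => x1 Z.
rewrite -(dsum_epsr (phi := fun y1 => S (x1 * y1)) y); last by solve_klin.
by rewrite scaler_dsum.
Qed.

Lemma dsum_antipode_cancel (M : lmodType k) (g : H -> H -> M) y : kbilin g ->
  dsum y (fun c d => dsum c (fun c1 c2 => dsum d (fun d1 d2 => g (c1 * S d2) (c2 * S d1))))
  = eps y *: g 1 1.
Proof.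
move=> hg.
rewrite dsum_coassoc; last by solve_klin.
transitivity (dsum y (fun c1 w => g (c1 * S w) 1)).
  apply: eq_dsum => c1 w.
  rewrite -dsum_coassoc; last by solve_klin.
  transitivity (dsum w (fun e d2 => eps e *: g (c1 * S d2) 1)).
    apply: eq_dsum => e d2.
    have := klin_dsumE e (fun c2 d1 => c2 * S d1) (kbilin_linr (c1 * S d2) hg).
    rewrite /= => <-.
    by rewrite dsum_antipoder (klinZ (kbilin_linr _ hg)).
  by apply: (dsum_epsl (phi := fun d2 => g (c1 * S d2) 1)); solve_klin.
have := klin_dsumE y (fun c1 w => c1 * S w) (kbilin_linl 1 hg).
rewrite /= => <-.
by rewrite dsum_antipoder (klinZ (kbilin_linl _ hg)).
Qed.

(* Expand eps(h2) through dsum_antipode_cancel: the factor Delta(S h1) Delta(h2)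
   then recombines into Delta(S(h1) h2), which collapses by the antipode axiom. *)
Lemma dsum_antipode_flip (M : lmodType k) (f : H -> H -> M) h : kbilin f ->
  dsum (S h) f = dsum h (fun x y => f (S y) (S x)).
Proof.
move=> hf.
pose K d p q := dsum d (fun d1 d2 => f (p * S d2) (q * S d1)).
have hK d : kbilin (K d) by rewrite /K; solve_klin.
transitivity (dsum h (fun x y => dsum y (fun c d => dsum (S x * c) (K d)))).
  rewrite -{1}(dsum_epsr (phi := fun z => dsum (S z) f) h); last by solve_klin.
  apply: eq_dsum => x y.
  rewrite scaler_dsum.
  transitivity (dsum (S x) (fun a b => dsum y (fun c d => dsum c (fun c1 c2 =>
                  K d (a * c1) (b * c2))))).
    apply: eq_dsum => a b.
    have := dsum_antipode_cancel y (g := fun p q => f (a * p) (b * q)).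
    rewrite !mulr1 => <-; last by solve_klin.
    apply: eq_dsum => c d; apply: eq_dsum => c1 c2; rewrite /K.
    by apply: eq_dsum => d1 d2; rewrite !mulrA.
  rewrite exchange_dsum; apply: eq_dsum => c d.
  by rewrite dsumM.
rewrite -dsum_coassoc; last by solve_klin.
transitivity (dsum h (fun z d => eps z *: K d 1 1)).
  apply: eq_dsum => z d.
  rewrite -dsum_dsum // dsum_antipodel.
  by rewrite (klinZ (klin_dsum (hK d))) dsum1.
rewrite (dsum_epsl (phi := fun d => K d 1 1)); last by rewrite /K; solve_klin.
by rewrite /K; apply: eq_dsum => d1 d2; rewrite !mul1r.
Qed.

Lemma dsum_antipode (M : lmodType k) (f : H -> H -> M) h : kbilin f ->
  dsum (S h) f = dsum h (fun x y => f (S x) (S y)).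
Proof.
move=> hf; rewrite dsum_antipode_flip // (dsumC h (g := fun x y => f (S y) (S x))) //.
solve_klin.
Qed.

Section FourfoldCoproduct.
Variables (M : lmodType k) (G : H -> H -> H -> H -> M).
Hypothesis linG1 : forall b c d, klin (fun x => G x b c d).
Hypothesis linG2 : forall a c d, klin (fun x => G a x c d).
Hypothesis linG3 : forall a b d, klin (fun x => G a b x d).
Hypothesis linG4 : forall a b c, klin (fun x => G a b c x).

Lemma dsum_reassoc4 h :
  dsum h (fun x y => dsum x (fun x1 x2 => dsum y (fun y1 y2 => G x1 x2 y1 y2))) =
  dsum h (fun x1 r => dsum r (fun m y2 => dsum m (fun x2 y1 => G x1 x2 y1 y2))).
Proof.
rewrite dsum_coassoc; last by solve_klin.
apply: eq_dsum => x1 r.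
by rewrite -dsum_coassoc; last by solve_klin.
Qed.

Lemma dsum_reassoc4C h :
  dsum h (fun x y => dsum x (fun x1 x2 => dsum y (fun y1 y2 => G x1 x2 y1 y2))) =
  dsum h (fun x1 r => dsum r (fun y1 n => dsum n (fun x2 y2 => G x1 x2 y1 y2))).
Proof.
rewrite dsum_reassoc4; apply: eq_dsum => x1 r.
transitivity (dsum r (fun m y2 => dsum m (fun y1 x2 => G x1 x2 y1 y2))).
  apply: eq_dsum => m y2.
  by rewrite (dsumC m (g := fun x2 y1 => G x1 x2 y1 y2)) //; solve_klin.
by rewrite dsum_coassoc; last by solve_klin.
Qed.

End FourfoldCoproduct.

Lemma eq_rsum (M : lmodType k) a (g g' : A -> H -> M) :
  (forall x y, g x y = g' x y) -> rsum a g = rsum a g'.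
Proof. by move=> e; apply: eq_bigr => p _; apply: e. Qed.

Lemma rsum1 (M : lmodType k) (f : A -> H -> M) : kbilin f -> rsum 1 f = f 1 1.
Proof. by case: hA => _ _ _ hrho hf; case: (hrho _ _ hf). Qed.

Lemma rsumM (M : lmodType k) (f : A -> H -> M) x y : kbilin f ->
  rsum (x * y) f = rsum x (fun a b => rsum y (fun c d => f (a * c) (b * d))).
Proof. by case: hA => _ _ _ hrho hf; case: (hrho _ _ hf) => _; apply. Qed.

Lemma rsum_coinv (M : lmodType k) (f : A -> H -> M) b : coinv rho b -> kbilin f ->
  rsum b f = f b 1.
Proof. by move=> hb hf; apply: hb. Qed.

Lemma rsumMr_coinv (M : lmodType k) (f : A -> H -> M) x b : coinv rho b -> kbilin f ->
  rsum (x * b) f = rsum x (fun a h => f (a * b) h).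
Proof.
move=> hb hf; rewrite rsumM //; apply: eq_rsum => a h.
by rewrite (rsum_coinv hb) ?mulr1 //; solve_klin.
Qed.

Lemma rsumMl_coinv (M : lmodType k) (f : A -> H -> M) x b : coinv rho b -> kbilin f ->
  rsum (b * x) f = rsum x (fun a h => f (b * a) h).
Proof.
move=> hb hf; rewrite rsumM // (rsum_coinv hb); last by solve_klin.
by apply: eq_rsum => a h; rewrite mul1r.
Qed.

Lemma coinv1 : coinv rho 1.
Proof. by move=> M f hf; apply: rsum1. Qed.

Lemma colinear_klin (s : H -> A) : colinear delta rho s -> klin s.
Proof. by case. Qed.

Lemma rsum_colinear (s : H -> A) h (M : lmodType k) (f : A -> H -> M) :
  colinear delta rho s -> kbilin f -> rsum (s h) f = dsum h (fun x y => f (s x) y).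
Proof. by case=> _ hs hf; apply: hs. Qed.

Lemma rsum_colinear_antipode (s : H -> A) h (M : lmodType k) (f : A -> H -> M) :
  colinear delta rho s -> kbilin f ->
  rsum (s (S h)) f = dsum h (fun x y => f (s (S x)) (S y)).
Proof.
move=> hs hf; rewrite (rsum_colinear _ hs hf) (dsum_antipode h (f := fun x y => f (s x) y)) //.
have hs_lin := colinear_klin hs; solve_klin.
Qed.

Lemma convE (f g : H -> A) h : conv delta f g h = dsum h (fun x y => f x * g y).
Proof. by []. Qed.

Lemma klin_conv (f g : H -> A) : klin f -> klin g -> klin (conv delta f g).
Proof.
move=> hf hg; change (klin (fun h => dsum h (fun x y => f x * g y))); solve_klin.
Qed.

Lemma eq_conv (f f' g g' : H -> A) :
  f =1 f' -> g =1 g' -> conv delta f g =1 conv delta f' g'.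
Proof. by move=> ef eg h; apply: eq_bigr => p _; rewrite ef eg. Qed.

Lemma eq_convl (f f' g : H -> A) h : f =1 f' -> conv delta f g h = conv delta f' g h.
Proof. by move=> ef; apply: eq_conv. Qed.

Lemma eq_convr (f g g' : H -> A) h : g =1 g' -> conv delta f g h = conv delta f g' h.
Proof. by move=> eg; apply: eq_conv. Qed.

Lemma convA (f g l : H -> A) : klin f -> klin g -> klin l ->
  conv delta (conv delta f g) l =1 conv delta f (conv delta g l).
Proof.
move=> hf hg hl h; rewrite [LHS]convE [RHS]convE.
transitivity (dsum h (fun x z => dsum x (fun a b => f a * g b * l z))).
  by apply: eq_dsum => x z; rewrite convE mulr_dsuml.
rewrite dsum_coassoc; last by solve_klin.
by apply: eq_dsum => x y; rewrite convE mulr_dsumr; apply: eq_dsum => a b; rewrite mulrA.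
Qed.

Lemma convf1 (f : H -> A) : klin f -> conv delta f (conv1 A eps) =1 f.
Proof.
move=> hf h; rewrite -[RHS](dsum_epsr (phi := f) h) //.
by rewrite convE; apply: eq_dsum => x y; rewrite /conv1 -scalerAr mulr1.
Qed.

Lemma conv1f (f : H -> A) : klin f -> conv delta (conv1 A eps) f =1 f.
Proof.
move=> hf h; rewrite -[RHS](dsum_epsl (phi := f) h) //.
by rewrite convE; apply: eq_dsum => x y; rewrite /conv1 -scalerAl mul1r.
Qed.

Section OmegaElement.
Variable s : H -> A.
Hypothesis hs : Omega delta rho s.

Lemma Omega_colinear : colinear delta rho s. Proof. by case: hs. Qed.
Lemma Omega_klin : klin s. Proof. by case: hs => [[]]. Qed.
Lemma Omega1 : s 1 = 1. Proof. by case: hs. Qed.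
Lemma OmegaM x y : s (x * y) = s x * s y. Proof. by case: hs. Qed.
Lemma Omega_klinS : klin (fun h => s (S h)).
Proof. exact: klin_comp klinS Omega_klin. Qed.

Lemma conv_Omega_antipode : conv delta s (fun h => s (S h)) =1 conv1 A eps.
Proof.
move=> h; rewrite convE; transitivity (s (dsum h (fun x y => x * S y))).
  by rewrite (klin_dsumE _ _ Omega_klin); apply: eq_dsum => x y; rewrite OmegaM.
by rewrite dsum_antipoder (klinZ Omega_klin) Omega1.
Qed.

Lemma conv_antipode_Omega : conv delta (fun h => s (S h)) s =1 conv1 A eps.
Proof.
move=> h; rewrite convE; transitivity (s (dsum h (fun x y => S x * y))).
  by rewrite (klin_dsumE _ _ Omega_klin); apply: eq_dsum => x y; rewrite OmegaM.
by rewrite dsum_antipodel (klinZ Omega_klin) Omega1.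
Qed.

Lemma conv_OmegaK (f : H -> A) : klin f ->
  conv delta (conv delta f s) (fun h => s (S h)) =1 f.
Proof.
move=> hf h; rewrite convA //; [|exact: Omega_klin|exact: Omega_klinS].
by rewrite (eq_convr _ _ conv_Omega_antipode) convf1.
Qed.

Lemma conv_antipodeK (f : H -> A) : klin f ->
  conv delta (conv delta f (fun h => s (S h))) s =1 f.
Proof.
move=> hf h; rewrite convA //; [|exact: Omega_klinS|exact: Omega_klin].
by rewrite (eq_convr _ _ conv_antipode_Omega) convf1.
Qed.

Lemma conv_antipodeKl (f : H -> A) : klin f ->
  conv delta (fun h => s (S h)) (conv delta s f) =1 f.
Proof.
move=> hf h; rewrite -convA //; [|exact: Omega_klinS|exact: Omega_klin].
by rewrite (eq_convl _ _ conv_antipode_Omega) conv1f.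
Qed.

End OmegaElement.

(* The coaction sends a(h1) b s(S h2) to a(h1) b s(S h3) (x) h2 S(h4); by
   cocommutativity the H-component becomes h3 S(h4) and collapses to eps. *)
Lemma coinv_dsum_conj (a s : H -> A) b h :
  colinear delta rho a -> Omega delta rho s -> coinv rho b ->
  coinv rho (dsum h (fun x y => a x * b * s (S y))).
Proof.
move=> ha hs hb M f hf.
have ha' := colinear_klin ha; have hs' := Omega_klin hs; have hsS := Omega_klinS hs.
change (rsum (dsum h (fun x y => a x * b * s (S y))) f =
        f (dsum h (fun x y => a x * b * s (S y))) 1).
rewrite (klin_dsumE _ _ (klin_rsum hf)) (klin_dsumE _ _ (kbilin_linl 1 hf)).
transitivity (dsum h (fun x y => dsum x (fun x1 x2 => dsum y (fun y1 y2 =>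
                f (a x1 * b * s (S y1)) (x2 * S y2))))).
  apply: eq_dsum => x y.
  rewrite rsumM // rsumMr_coinv //; last by solve_klin.
  rewrite (rsum_colinear _ ha); last by solve_klin.
  apply: eq_dsum => x1 x2.
  by rewrite (rsum_colinear_antipode _ (Omega_colinear hs)); last by solve_klin.
rewrite dsum_reassoc4C; try by move=> *; solve_klin.
apply: eq_dsum => x1 r.
transitivity (dsum r (fun y1 n => eps n *: f (a x1 * b * s (S y1)) 1)).
  apply: eq_dsum => y1 n.
  rewrite -(klinZ (kbilin_linr _ hf)) -dsum_antipoder.
  by rewrite (klin_dsumE _ _ (kbilin_linr _ hf)).
by rewrite (dsum_epsr (phi := fun y1 => f (a x1 * b * s (S y1)) 1)); last by solve_klin.
Qed.

Lemma coinv_conv_antipode (a s : H -> A) h : colinear delta rho a -> Omega delta rho s ->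
  coinv rho (conv delta a (fun y => s (S y)) h).
Proof.
move=> ha hs; have := coinv_dsum_conj h ha hs coinv1.
by rewrite convE; under eq_dsum do rewrite mulr1.
Qed.

Section Cleaving.
Variables (t u t0 : H -> A).
Hypothesis hcl : cleaving delta eps rho t u.
Hypothesis hBc : forall a b, coinv rho a -> coinv rho b -> a * b = b * a.
Hypothesis ht0 : Omega delta rho t0.

Lemma t_colinear : colinear delta rho t. Proof. by case: hcl. Qed.
Lemma t_klin : klin t. Proof. exact: colinear_klin t_colinear. Qed.
Lemma u_klin : klin u. Proof. by case: hcl. Qed.
Lemma conv_tu : conv delta t u =1 conv1 A eps. Proof. by case: hcl. Qed.

Lemma conv_cleaving_Omega s : Omega delta rho s ->
  conv delta (conv delta t (fun y => s (S y))) (conv delta s u) =1 conv1 A eps.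
Proof.
move=> hs x; have hsu : klin (conv delta s u) by apply: klin_conv (Omega_klin hs) u_klin.
rewrite convA //; [|exact: t_klin|exact: Omega_klinS].
by rewrite (eq_convr _ _ (conv_antipodeKl hs u_klin)) conv_tu.
Qed.

(* With the B-valued, mutually inverse maps w := t * (s o S) and w' := s * u we
   have t = w * s and u = (s o S) * w', so t(h1) b u(h2) = w(h1) beta(h2) w'(h3)
   with beta(h) := s(h1) b s(S h2) in B.  Moving beta to the front (B is
   commutative, H cocommutative) leaves beta(h1) (w * w')(h2) = beta(h). *)
Lemma act_Omega s b h : Omega delta rho s -> coinv rho b ->
  act delta t u h b = dsum h (fun x y => s x * b * s (S y)).
Proof.
move=> hs hb.
have ht := t_klin; have hu := u_klin; have hs' := Omega_klin hs; have hsS := Omega_klinS hs.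
pose w := conv delta t (fun y => s (S y)).
pose w' := conv delta s u.
pose beta m := dsum m (fun x y => s x * b * s (S y)).
have hw : klin w by apply: klin_conv.
have hw' : klin w' by apply: klin_conv.
have hbeta : klin beta by rewrite /beta; solve_klin.
have cw x : coinv rho (w x) by apply: coinv_conv_antipode => //; apply: t_colinear.
have cbeta m : coinv rho (beta m) by exact: coinv_dsum_conj m (Omega_colinear hs) hs hb.
change (dsum h (fun x y => t x * b * u y) = beta h).
transitivity (dsum h (fun x y => dsum x (fun x1 x2 => dsum y (fun y1 y2 =>
                w x1 * s x2 * b * (s (S y1) * w' y2))))).
  apply: eq_dsum => x y.
  rewrite -[t x](conv_antipodeK hs ht) -[u y](conv_antipodeKl hs hu) !convE !mulr_dsuml.
  by apply: eq_dsum => x1 x2; rewrite mulr_dsumr.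
rewrite dsum_reassoc4; try by move=> *; solve_klin.
transitivity (dsum h (fun x1 r => dsum r (fun m y2 => beta m * w x1 * w' y2))).
  apply: eq_dsum => x1 r; apply: eq_dsum => m y2.
  rewrite -(hBc (cw x1) (cbeta m)) /beta mulr_dsumr mulr_dsuml.
  by apply: eq_dsum => x2 y1; rewrite !mulrA.
rewrite -dsum_coassoc; last by solve_klin.
transitivity (dsum h (fun z y2 => dsum z (fun x1 m => beta x1 * w m * w' y2))).
  apply: eq_dsum => z y2.
  by rewrite (dsumC z (g := fun x1 m => beta m * w x1 * w' y2)) //; solve_klin.
rewrite dsum_coassoc; last by solve_klin.
transitivity (dsum h (fun x1 r => eps r *: beta x1)).
  apply: eq_dsum => x1 r.
  transitivity (beta x1 * conv delta w w' r).
    by rewrite convE mulr_dsumr; apply: eq_dsum => m y2; rewrite mulrA.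
  by rewrite conv_cleaving_Omega // /conv1 -scalerAr mulr1.
by rewrite dsum_epsr.
Qed.

Lemma coinv_act h b : coinv rho b -> coinv rho (act delta t u h b).
Proof.
move=> hb; rewrite (act_Omega h ht0 hb).
exact: coinv_dsum_conj h (Omega_colinear ht0) ht0 hb.
Qed.

Lemma klin_act b : klin (fun h => act delta t u h b).
Proof.
have ht := t_klin; have hu := u_klin.
change (klin (fun h => dsum h (fun x y => t x * b * u y))); solve_klin.
Qed.

Lemma dsum_act_Omega s h b : Omega delta rho s -> coinv rho b ->
  dsum h (fun x y => act delta t u x b * s y) = s h * b.
Proof.
move=> hs hb.
have hs' := Omega_klin hs; have hsS := Omega_klinS hs.
transitivity (dsum h (fun x y => dsum x (fun c d => s c * b * s (S d) * s y))).
  by apply: eq_dsum => x y; rewrite (act_Omega x hs hb) mulr_dsuml.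
rewrite dsum_coassoc; last by solve_klin.
transitivity (dsum h (fun c m => eps m *: (s c * b))).
  apply: eq_dsum => c m.
  transitivity (s c * b * conv delta (fun y => s (S y)) s m).
    by rewrite convE mulr_dsumr; apply: eq_dsum => d y; rewrite !mulrA.
  by rewrite conv_antipode_Omega // /conv1 -scalerAr mulr1.
by rewrite (dsum_epsr (phi := fun c => s c * b)); last by solve_klin.
Qed.

Section Cocycle.
Variable v : H -> A.
Hypothesis hv : Z1 delta eps rho t u v.

Lemma Z1_klin : klin v. Proof. by case: hv. Qed.
Lemma Z1_coinv h : coinv rho (v h). Proof. by case: hv. Qed.
Lemma Z1_cocycle h l : v (h * l) = dsum h (fun x y => act delta t u x (v l) * v y).
Proof. by case: hv => _ _ _; apply. Qed.

Lemma Z1_1 : v 1 = 1.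
Proof.
have hact := klin_act; have hv' := Z1_klin.
have ht0' := Omega_klin ht0; have ht0S := Omega_klinS ht0.
case: hv => _ _ [w [hw _ hvw _]] _.
have e := Z1_cocycle 1 1; rewrite mulr1 dsum1 in e; last by solve_klin.
rewrite (act_Omega 1 ht0 (Z1_coinv 1)) dsum1 in e; last by solve_klin.
rewrite antipode1 (Omega1 ht0) mul1r mulr1 in e.
have vw1 : v 1 * w 1 = 1.
  have := hvw 1; rewrite convE dsum1; last by solve_klin.
  by move=> ->; rewrite /conv1 eps1 scale1r.
by rewrite -vw1 {2}e -mulrA vw1 mulr1.
Qed.

Lemma dsum_act_Z1_Omega b h : coinv rho b ->
  dsum h (fun x y => dsum x (fun p q => act delta t u p b * v q) * t0 y) =
  conv delta v t0 h * b.
Proof.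
move=> hb.
have hact := klin_act; have hv' := Z1_klin; have ht0' := Omega_klin ht0.
transitivity (dsum h (fun x y => dsum x (fun p q => act delta t u p b * v q * t0 y))).
  by apply: eq_dsum => x y; rewrite mulr_dsuml.
rewrite dsum_coassoc; last by solve_klin.
transitivity (dsum h (fun p r => dsum r (fun q y => v q * act delta t u p b * t0 y))).
  apply: eq_dsum => p r; apply: eq_dsum => q y.
  by rewrite (hBc (coinv_act p hb) (Z1_coinv q)).
rewrite -dsum_coassoc; last by solve_klin.
transitivity (dsum h (fun z y => dsum z (fun p q => v p * act delta t u q b * t0 y))).
  apply: eq_dsum => z y.
  by rewrite (dsumC z (g := fun p q => v q * act delta t u p b * t0 y)) //; solve_klin.
rewrite dsum_coassoc; last by solve_klin.
transitivity (dsum h (fun p r => v p * (t0 r * b))).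
  apply: eq_dsum => p r; rewrite -(dsum_act_Omega r ht0 hb) mulr_dsumr.
  by apply: eq_dsum => q y; rewrite !mulrA.
by rewrite convE mulr_dsuml; apply: eq_dsum => p r; rewrite mulrA.
Qed.

Lemma colinear_conv_Z1_Omega : colinear delta rho (conv delta v t0).
Proof.
have hv' := Z1_klin; have ht0' := Omega_klin ht0.
split; first exact: klin_conv.
move=> h M f hf.
change (rsum (conv delta v t0 h) f = dsum h (fun x y => f (conv delta v t0 x) y)).
rewrite convE (klin_dsumE _ _ (klin_rsum hf)).
transitivity (dsum h (fun x y => dsum y (fun y1 y2 => f (v x * t0 y1) y2))).
  apply: eq_dsum => x y; rewrite rsumMl_coinv; [|exact: Z1_coinv|solve_klin].
  by rewrite (rsum_colinear _ (Omega_colinear ht0)); last by solve_klin.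
rewrite -dsum_coassoc; last by solve_klin.
by apply: eq_dsum => z y2; rewrite convE (klin_dsumE _ _ (kbilin_linl y2 hf)).
Qed.

Lemma conv_Z1_Omega : Omega delta rho (conv delta v t0).
Proof.
have hact := klin_act; have hv' := Z1_klin; have ht0' := Omega_klin ht0.
split; first exact: colinear_conv_Z1_Omega.
  by rewrite convE dsum1 ?Z1_1 ?(Omega1 ht0) ?mulr1 //; solve_klin.
move=> x y; rewrite convE dsumM; last by solve_klin.
transitivity (dsum x (fun x1 x2 => dsum y (fun y1 y2 =>
    dsum x1 (fun p q => act delta t u p (v y1) * v q) * t0 x2 * t0 y2))).
  apply: eq_dsum => x1 x2; apply: eq_dsum => y1 y2.
  by rewrite (OmegaM ht0) mulrA Z1_cocycle.
rewrite exchange_dsum.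
transitivity (dsum y (fun y1 y2 => conv delta v t0 x * v y1 * t0 y2)).
  apply: eq_dsum => y1 y2.
  by rewrite -(dsum_act_Z1_Omega x (Z1_coinv y1)) mulr_dsuml.
by rewrite [conv delta v t0 y]convE mulr_dsumr; apply: eq_dsum => y1 y2; rewrite mulrA.
Qed.

End Cocycle.

Section OmegaToCocycle.
Variable s : H -> A.
Hypothesis hs : Omega delta rho s.
Let u0 := fun h => t0 (S h).
Let V := conv delta s u0.

Lemma coinv_conv_Omega_antipode h : coinv rho (V h).
Proof. exact: coinv_conv_antipode (Omega_colinear hs) ht0. Qed.

Lemma conv_Omega_antipodeM h l : V (h * l) = dsum h (fun x y => s x * V l * u0 y).
Proof.
have hs' := Omega_klin hs; have hu0 : klin u0 := Omega_klinS ht0.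
rewrite /V convE dsumM; last by solve_klin.
apply: eq_dsum => x1 x2; rewrite convE mulr_dsumr mulr_dsuml.
by apply: eq_dsum => y1 y2; rewrite /u0 (OmegaM hs) antipodeM (OmegaM ht0) !mulrA.
Qed.

(* After commuting inside B, act_Omega (with t0) turns the left side into
   s(h1) t0(S h2) t0(h3) V(l) t0(S h4), whose middle factor collapses to eps. *)
Lemma dsum_act_conv_Omega_antipode h l :
  dsum h (fun x y => act delta t u x (V l) * V y) = dsum h (fun x y => s x * V l * u0 y).
Proof.
have hs' := Omega_klin hs; have hu0 : klin u0 := Omega_klinS ht0.
have ht0' := Omega_klin ht0; have hact := klin_act.
have hV : klin V by apply: klin_conv.
have cV := coinv_conv_Omega_antipode.
transitivity (dsum h (fun x y => V x * act delta t u y (V l))).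
  rewrite [RHS](dsumC h (g := fun x y => V x * act delta t u y (V l))); last by solve_klin.
  by apply: eq_dsum => x y; rewrite (hBc (coinv_act x (cV l)) (cV y)).
transitivity (dsum h (fun x y => dsum x (fun x1 x2 => dsum y (fun y1 y2 =>
                s x1 * u0 x2 * (t0 y1 * V l * u0 y2))))).
  apply: eq_dsum => x y; rewrite (act_Omega y ht0 (cV l)) /V convE mulr_dsuml.
  by apply: eq_dsum => x1 x2; rewrite mulr_dsumr.
rewrite dsum_reassoc4; try by move=> *; solve_klin.
apply: eq_dsum => x1 r.
transitivity (dsum r (fun m y2 => eps m *: (s x1 * V l * u0 y2))).
  apply: eq_dsum => m y2.
  transitivity (s x1 * conv delta u0 t0 m * V l * u0 y2).
    rewrite convE mulr_dsumr !mulr_dsuml; apply: eq_dsum => x2 y1.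
    by rewrite !mulrA.
  by rewrite (conv_antipode_Omega ht0) /conv1 -scalerAr mulr1 -!scalerAl.
by rewrite (dsum_epsl (phi := fun y2 => s x1 * V l * u0 y2)); last by solve_klin.
Qed.

Lemma conv_Omega_antipode_Z1 : Z1 delta eps rho t u V.
Proof.
have hs' := Omega_klin hs; have hsS := Omega_klinS hs.
have ht0' := Omega_klin ht0; have hu0 : klin u0 := Omega_klinS ht0.
have hV : klin V by apply: klin_conv.
have hW : klin (conv delta t0 (fun h => s (S h))) by apply: klin_conv.
split => //.
- exact: coinv_conv_Omega_antipode.
- exists (conv delta t0 (fun h => s (S h))); split => //.
  + by move=> h; apply: coinv_conv_antipode (Omega_colinear ht0) hs.
  + move=> h; rewrite convA //.
    by rewrite (eq_convr _ _ (conv_antipodeKl ht0 hsS)) conv_Omega_antipode.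
  + move=> h; rewrite convA //.
    by rewrite (eq_convr _ _ (conv_antipodeKl hs hu0)) conv_Omega_antipode.
- move=> h l; rewrite conv_Omega_antipodeM.
  exact: esym (dsum_act_conv_Omega_antipode h l).
Qed.

End OmegaToCocycle.

Lemma klin_coboundary b c : klin (fun h => act delta t u h b * c).
Proof. have hact := klin_act; solve_klin. Qed.

Lemma conv_coboundary_Omega s b c h : Omega delta rho s -> coinv rho b -> coinv rho c ->
  conv delta (fun x => act delta t u x b * c) s h = c * (s h * b).
Proof.
move=> hs hb hc; rewrite -(dsum_act_Omega h hs hb) convE mulr_dsumr.
by apply: eq_dsum => x y; rewrite (hBc (coinv_act x hb) hc) mulrA.
Qed.

Lemma cohomologous_equivOmega v v1 : Z1 delta eps rho t u v -> Z1 delta eps rho t u v1 ->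
  cohomologous delta rho t u v v1 -> equivOmega rho (conv delta v t0) (conv delta v1 t0).
Proof.
move=> hv hv1 [b [c [hb hc bc cb ev]]].
exists b; split; first by split => //; exists c.
move=> h; rewrite (eq_convl _ _ ev) convA //; [|exact: klin_coboundary|exact: Z1_klin hv1|exact: Omega_klin ht0].
by rewrite (conv_coboundary_Omega _ (conv_Z1_Omega hv1) hb hc) mulrA bc mul1r.
Qed.

Lemma equivOmega_cohomologous s1 s2 :
  Omega delta rho s1 -> Omega delta rho s2 -> equivOmega rho s1 s2 ->
  cohomologous delta rho t u (conv delta s1 (fun h => t0 (S h)))
                             (conv delta s2 (fun h => t0 (S h))).
Proof.
move=> hs1 hs2 [b [[hb [c [hc bc cb]]] e]].
exists b, c; split => // h.
rewrite -convA; [|exact: klin_coboundary|exact: Omega_klin hs2|exact: Omega_klinS ht0].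
apply: eq_convl => x.
by rewrite (conv_coboundary_Omega _ hs2 hb hc) -e mulrA cb mul1r.
Qed.

Lemma equivOmega_conv_cohomologous v v1 : Z1 delta eps rho t u v -> Z1 delta eps rho t u v1 ->
  equivOmega rho (conv delta v t0) (conv delta v1 t0) -> cohomologous delta rho t u v v1.
Proof.
move=> hv hv1 /(equivOmega_cohomologous (conv_Z1_Omega hv) (conv_Z1_Omega hv1)).
move=> [b [c [hb hc bc cb ev]]]; exists b, c; split => // h.
rewrite -(conv_OmegaK ht0 (Z1_klin hv) h) ev.
by apply: eq_convr => x; rewrite conv_OmegaK //; exact: Z1_klin.
Qed.

End Cleaving.

End CleftHopfGalois.

Theorem proposition5p7 (k : comPzRingType) (H A : algType k)
    (delta : H -> seq (H * H)) (eps : H -> k) (S : H -> H)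
    (rho : A -> seq (A * H)) (t u t0 : H -> A) :
  is_hopf delta eps S -> cocommutative delta ->
  is_comod_alg delta eps rho -> cleaving delta eps rho t u ->
  (forall a b, coinv rho a -> coinv rho b -> a * b = b * a) ->
  Omega delta rho t0 ->
  let F := fun v => conv delta v t0 in
  let Finv := fun s => conv delta s (fun h => t0 (S h)) in
  [/\ (forall v, Z1 delta eps rho t u v -> Omega delta rho (F v)),
      (forall s, Omega delta rho s -> Z1 delta eps rho t u (Finv s)),
      (forall v, Z1 delta eps rho t u v -> Finv (F v) =1 v),
      (forall s, Omega delta rho s -> F (Finv s) =1 s) &
    [/\
      (forall v v1, Z1 delta eps rho t u v -> Z1 delta eps rho t u v1 ->
         cohomologous delta rho t u v v1 -> equivOmega rho (F v) (F v1)),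
      (forall s1 s2, Omega delta rho s1 -> Omega delta rho s2 ->
         equivOmega rho s1 s2 -> cohomologous delta rho t u (Finv s1) (Finv s2)) &
      (forall v v1, Z1 delta eps rho t u v -> Z1 delta eps rho t u v1 ->
         (cohomologous delta rho t u v v1 <-> equivOmega rho (F v) (F v1)))]].
Proof.
move=> hH hcc hA hcl hBc ht0 F Finv.
have Z1_Omega := conv_Z1_Omega hH hcc hA hcl hBc ht0.
have Omega_Z1 := conv_Omega_antipode_Z1 hH hcc hA hcl hBc ht0.
have cohom_equiv := cohomologous_equivOmega hH hcc hA hcl hBc ht0.
split=> [v hv|s hs|v hv|s hs|].
- exact: Z1_Omega.
- exact: Omega_Z1.
- exact (conv_OmegaK hH ht0 (Z1_klin hv)).
- exact (conv_antipodeK hH ht0 (Omega_klin hs)).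
split=> [v v1 hv hv1|s1 s2 hs1 hs2|v v1 hv hv1].
- exact: cohom_equiv.
- exact (equivOmega_cohomologous hH hcc hA hcl hBc ht0 hs1 hs2).
split; first exact: cohom_equiv.
exact (equivOmega_conv_cohomologous hH hcc hA hcl hBc ht0 hv hv1).
Qed.
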